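(* Let $n\geq 2$. The structure $\mathbf{D}_{n,<_1,\ldots,<_n}=(D_n,<,<_1,\ldots,<_n)$ is ultrahomogeneous and its age is $\mathcal{PO}_{n,<_1,\ldots,<_n}$. Consequently, $\mathcal{PO}_{n,<_1,\ldots,<_n}$ is a Fra\''iss\'e class and $\mathbf{D}_{n,<_1,\ldots,<_n}$ is its Fra\''iss\'e limit.
   Context: Fix $n\geq 2$ and a set $D_n\subseteq\mathbb{Q}^n$ which is dense in $\mathbb{Q}^n$ (product topology) and such that no two distinct points of $D_n$ share a common coordinate. On $D_n$, $<$ is the product order ($\mathbf{a}<\mathbf{b}$ iff $a_i\leq b_i$ for all $i$ and $\mathbf{a}\neq\mathbf{b}$) and $<_i$ is the $i$th coordinate order ($\mathbf{a}<_i\mathbf{b}$ iff $a_i<b_i$). Structures are in the signature of $n+1$ binary relation symbols; embeddings are injective maps preserving and reflecting each relation, substructures are subsets with the induced relations. An $n$-dimensional partial order with realizers is a structure $(P,<,<_1,\ldots,<_n)$ where $<_1,\ldots,<_n$ are linear (strict) orders on $P$ and $<$ equals $<_1\cap\cdots\cap<_n$ (i.e. $a<b$ iff $a<_ib$ for all $i$). $\mathcal{PO}_{n,<_1,\ldots,<_n}$ is the class of all finite such structures. A structure is ultrahomogeneous if every isomorphism between finite substructures extends to an automorphism. The age of a structure $\mathbf{M}$ is the class of all finite structures in the same signature embeddable in $\mathbf{M}$. A Fra\''iss\'e class is a nonempty class of finite structures satisfying the hereditary property (closed under structures embeddable into members), joint embedding property (any two members embed into a common member) and amalgamation property (for embeddings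 $e:\mathbf{A}\to\mathbf{B}$, $f:\mathbf{A}\to\mathbf{C}$ of members there are a member $\mathbf{D}$ and embeddings $g:\mathbf{B}\to\mathbf{D}$, $h:\mathbf{C}\to\mathbf{D}$ with $g\circ e=h\circ f$); its Fra\''iss\'e limit is the unique (up to isomorphism) countable ultrahomogeneous structure whose age is the class. *)

From HB Require Import structures.
From mathcomp Require Import all_boot all_order all_algebra.
From Stdlib Require Import List.
Set Implicit Arguments. Unset Strict Implicit. Unset Printing Implicit Defensive.
Import Order.TTheory GRing.Theory Num.Theory.

Record structure (n : nat) := Structure {
  carrier :> Type;
  rlt : carrier -> carrier -> Prop;
  rlti : 'I_n -> carrier -> carrier -> Prop
}.

Section Model.
Variable n : nat.

Definition finite_structure (A : structure n) : Prop :=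
  exists s : list A, forall x : A, In x s.

Definition embedding (A B : structure n) (f : A -> B) : Prop :=
  (forall x y, f x = f y -> x = y) /\
  (forall x y, rlt x y <-> rlt (f x) (f y)) /\
  (forall i x y, rlti i x y <-> rlti i (f x) (f y)).

Definition embeds (A B : structure n) : Prop := exists f : A -> B, embedding f.

Definition isomorphism (A B : structure n) (f : A -> B) : Prop :=
  embedding f /\ (forall y, exists x, f x = y).

Definition automorphism (M : structure n) (f : M -> M) : Prop := isomorphism f.

Definition substructure (M : structure n) (S : M -> Prop) : structure n :=
  @Structure n {x : M | S x}
    (fun x y => rlt (proj1_sig x) (proj1_sig y))
    (fun i x y => rlti i (proj1_sig x) (proj1_sig y)).

Definition finite_subset (M : structure n) (S : M -> Prop) : Prop :=
  exists s : list M, forall x, S x -> In x s.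

Definition ultrahomogeneous (M : structure n) : Prop :=
  forall (S1 S2 : M -> Prop), finite_subset S1 -> finite_subset S2 ->
  forall g : substructure S1 -> substructure S2, isomorphism g ->
  exists sigma : M -> M, automorphism sigma /\
    forall x : substructure S1, sigma (proj1_sig x) = proj1_sig (g x).

Definition age (M : structure n) (A : structure n) : Prop :=
  finite_structure A /\ embeds A M.

Definition countable_structure (M : structure n) : Prop :=
  exists f : M -> nat, forall x y, f x = f y -> x = y.

Definition class := structure n -> Prop.

Definition Fraisse_class (K : class) : Prop :=
  (forall A, K A -> finite_structure A) /\
  (exists A, K A) /\
  (forall A B, K A -> finite_structure B -> embeds B A -> K B) /\
  (forall A B, K A -> K B -> exists C, K C /\ embeds A C /\ embeds B C) /\
  (forall (A B C : structure n) (e : A -> B) (f : A -> C),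
     K A -> K B -> K C -> embedding e -> embedding f ->
     exists (D : structure n) (g : B -> D) (h : C -> D),
       K D /\ embedding g /\ embedding h /\ forall x, g (e x) = h (f x)).

Definition Fraisse_limit (K : class) (M : structure n) : Prop :=
  countable_structure M /\ ultrahomogeneous M /\ (forall A, age M A <-> K A).

Definition strict_linear_order (T : Type) (r : T -> T -> Prop) : Prop :=
  (forall x, ~ r x x) /\
  (forall x y z, r x y -> r y z -> r x z) /\
  (forall x y, x <> y -> r x y \/ r y x).

Definition is_PO_realizers (A : structure n) : Prop :=
  (forall i, strict_linear_order (rlti i : A -> A -> Prop)) /\
  (forall x y : A, rlt x y <-> forall i, rlti i x y).

Definition PO_class : class :=
  fun A => finite_structure A /\ is_PO_realizers A.

End Model.

Local Open Scope ring_scope.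

(* D is dense in Q^n (product topology): it meets every nonempty open box *)
Definition dense_in_Qn (n : nat) (D : {ffun 'I_n -> rat} -> Prop) : Prop :=
  forall a b : {ffun 'I_n -> rat}, (forall i, a i < b i) ->
  exists d, D d /\ forall i, a i < d i < b i.

Definition no_shared_coordinate (n : nat) (D : {ffun 'I_n -> rat} -> Prop) : Prop :=
  forall d e, D d -> D e -> d <> e -> forall i, d i <> e i.

Definition D_structure (n : nat) (D : {ffun 'I_n -> rat} -> Prop) : structure n :=
  @Structure n {x : {ffun 'I_n -> rat} | D x}
    (fun a b => (forall i, proj1_sig a i <= proj1_sig b i) /\ proj1_sig a <> proj1_sig b)
    (fun i a b => proj1_sig a i < proj1_sig b i).

From HB Require Import structures.
From mathcomp Require Import all_boot all_order all_algebra.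
From Stdlib Require Import List Classical ClassicalEpsilon ProofIrrelevance.
Import Order.TTheory GRing.Theory Num.Theory.

Set Implicit Arguments.
Unset Strict Implicit.
Unset Printing Implicit Defensive.

(* Distinct points of D_n differ in every coordinate, so each <_i is a strict
   linear order on D_n and a < b holds iff a <_i b for every i; consequently any
   map between such structures that preserves and reflects all the <_i is an
   embedding.  The heart of the proof is a one-point extension property: a
   finite partial map into D_n preserving and reflecting the <_i extends to any
   new point x, because the i-th coordinate of the image of x is only required
   to lie strictly between the i-th coordinates of the images of the finitely
   many points <_i-below and <_i-above x, and density of D_n provides a point in
   the resulting open box.  Iterating it embeds every finite n-dimensional
   partial order into D_n, so the age of D_n is PO_n; a back-and-forth along an
   enumeration of the countable set D_n turns every finite partial isomorphism
   into an automorphism.  Joint embedding and amalgamation are then carried out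
   inside D_n: embed C, extend the induced partial map on the image of A to all
   of B, and take the substructure on the union of the two images. *)

Section FiniteGap.
Variable R : realDomainType.
Local Open Scope ring_scope.

Lemma exists_le_lt (ls us : list R) :
  (forall l u, In l ls -> In u us -> l < u) ->
  exists c, (forall l, In l ls -> l <= c) /\ (forall u, In u us -> c < u).
Proof.
elim: ls => [_|l ls IH sep].
  have [c Hc] : exists c, forall u, In u us -> c < u.
    elim: us => [|u us [c Hc]]; first by exists 0.
    exists (Num.min c (u - 1)) => v [<-|/Hc cv]; rewrite gt_min ?cv //.
    by rewrite gtrDl ltrN10 orbT.
  by exists c.
have [|c [Hl Hu]] := IH; first by move=> l' u Hl'; apply: sep; right.
exists (Num.max c l); split=> [l' [<-|/Hl cl']|u Hu']; rewrite ?le_max ?lexx ?orbT //.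
  by rewrite cl'.
by rewrite gt_max Hu // sep //; left.
Qed.

Lemma exists_gap (ls us : list R) :
  (forall l u, In l ls -> In u us -> l < u) ->
  exists lo hi, lo < hi /\
    (forall l, In l ls -> l <= lo) /\ (forall u, In u us -> hi <= u).
Proof.
move=> sep; have [lo [Hl Hu]] := exists_le_lt sep.
have [|c [Hc clo]] := @exists_le_lt (map -%R us) [:: -lo].
  by move=> _ _ /in_map_iff [u [<- /Hu lou]] [<-|[]]; rewrite ltrN2.
exists lo, (- c); split; first by rewrite ltrNr; apply: clo; left.
by split=> // u Hu'; rewrite lerNl; apply/Hc/in_map.
Qed.

Lemma exists_image_list (E X : Type) (L : list E) (P : E -> Prop) (f : E -> X) :
  exists xs, forall x, In x xs <-> exists p, In p L /\ P p /\ f p = x.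
Proof.
elim: L => [|e L [xs Hxs]]; first by exists nil => x; split=> [[]|[p [[]]]].
case: (classic (P e)) => Pe; last first.
  exists xs => x; rewrite Hxs; split=> [[p [Lp Hp]]|[p [[<-|Lp] [Pp fp]]]] //.
  - by exists p; split=> //; right.
  - by exists p.
exists (f e :: xs) => x; split=> [[<-|/Hxs [p [Lp Hp]]]|[p [[<-|Lp] [Pp <-]]]].
- by exists e; split=> //; left.
- by exists p; split=> //; right.
- by left.
- by right; apply/Hxs; exists p.
Qed.

Lemma exists_gap_on (E : Type) (L : list E) (P Q : E -> Prop) (f : E -> R) :
  (forall p q, In p L -> In q L -> P p -> Q q -> f p < f q) ->
  exists lo hi, lo < hi /\ (forall p, In p L -> P p -> f p <= lo) /\
                          (forall q, In q L -> Q q -> hi <= f q).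
Proof.
move=> sep; have [ls Hls] := exists_image_list L P f.
have [us Hus] := exists_image_list L Q f.
have [|lo [hi [lohi [Hlo Hhi]]]] := @exists_gap ls us.
  by move=> _ _ /Hls [p [Lp [Pp <-]]] /Hus [q [Lq [Qq <-]]]; apply: sep.
exists lo, hi; split=> //; split=> [p Lp Pp|q Lq Qq].
  by apply/Hlo/Hls; exists p.
by apply/Hhi/Hus; exists q.
Qed.

End FiniteGap.

Lemma sig_eq (T : Type) (P : T -> Prop) (x y : {t | P t}) :
  proj1_sig x = proj1_sig y -> x = y.
Proof. by apply: eq_sig_hprop => t; apply: proof_irrelevance. Qed.

Lemma strict_linear_eq (T : Type) (r : T -> T -> Prop) (x y : T) :
  strict_linear_order r -> ~ r x y -> ~ r y x -> x = y.
Proof. by move=> [_ [_ tot]] nxy nyx; apply: NNPP => /tot []. Qed.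

Lemma strict_linear_order_inj (T U : Type) (r : T -> T -> Prop)
    (s : U -> U -> Prop) (f : T -> U) :
  injective f -> (forall x y, r x y <-> s (f x) (f y)) ->
  strict_linear_order s -> strict_linear_order r.
Proof.
move=> finj fr [irr [trans tot]]; split=> [x /fr /irr //|]; split.
  by move=> x y z /fr xy /fr yz; apply/fr/(trans _ _ _ xy yz).
by move=> x y /(contra_not (@finj x y)) /tot [] /fr; [left|right].
Qed.

Lemma strict_linear_transfer (T : Type) (r : T -> T -> Prop) (x y : T)
    (d : Order.disp_t) (X : porderType d) (u v : X) :
  strict_linear_order r -> x <> y ->
  (r x y -> (u < v)%O) -> (r y x -> (v < u)%O) -> r x y <-> (u < v)%O.
Proof.
move=> [_ [_ tot]] xy ruv rvu; split=> // uv.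
by case: (tot _ _ xy) => // /rvu vu; move: (lt_trans uv vu); rewrite ltxx.
Qed.

Lemma countable_enumeration (T : Type) (x0 : T) (f : T -> nat) :
  injective f -> exists en : nat -> T, forall x, exists k, en k = x.
Proof.
move=> finj; exists (fun k => epsilon (inhabits x0) (fun x => f x = k)) => x.
exists (f x); apply: finj.
by apply: (epsilon_spec (inhabits x0) (fun y => f y = f x)); exists x.
Qed.

Section Structures.
Variable n : nat.
Implicit Types A B C M : structure n.

Definition rlti_linear A : Prop := forall i, strict_linear_order (@rlti n A i).

Definition rlti_agree A B (p q : A * B) : Prop :=
  forall i, rlti i p.1 q.1 <-> rlti i p.2 q.2.

Definition partial_iso A B (L : list (A * B)) : Prop :=
  forall p q, In p L -> In q L -> rlti_agree p q.

Definition extension_property M : Prop :=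
  forall A, rlti_linear A -> forall L : list (A * M), partial_iso L ->
  forall x : A, exists y : M, partial_iso ((x, y) :: L).

Lemma partial_iso_incl A B (L L' : list (A * B)) :
  incl L L' -> partial_iso L' -> partial_iso L.
Proof. by move=> LL' iso p q /LL' Lp /LL' Lq; apply: iso. Qed.

Lemma partial_iso_swap A B (L : list (A * B)) :
  partial_iso L -> partial_iso (map swap_pair L).
Proof.
move=> iso _ _ /in_map_iff [p [<- Lp]] /in_map_iff [q [<- Lq]] i.
exact: iff_sym (iso p q Lp Lq i).
Qed.

Lemma finite_substructure M (S : M -> Prop) :
  finite_subset S -> finite_structure (substructure S).
Proof.
move=> [s Hs].
suff [l Hl] : exists l : list {x | S x}, forall y, In (proj1_sig y) s -> In y l.
  by exists l => y; apply/Hl/Hs/(proj2_sig y).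
elim: s {Hs} => [|x s [l Hl]]; first by exists nil.
case: (classic (S x)) => [Sx|nSx].
  by exists (exist _ x Sx :: l) => y [E|/Hl]; [left; apply: sig_eq | right].
by exists l => y [E|/Hl //]; case: nSx; rewrite E; apply: proj2_sig.
Qed.

Lemma embedding_comp A B C (f : A -> B) (g : B -> C) :
  embedding f -> embedding g -> embedding (fun x => g (f x)).
Proof.
move=> [finj [flt flti]] [ginj [glt glti]]; split; first by move=> x y /ginj /finj.
split=> [x y|i x y]; first exact: iff_trans (flt x y) (glt _ _).
exact: iff_trans (flti i x y) (glti i _ _).
Qed.

Lemma embedding_corestrict M A (S : M -> Prop) (f : A -> M) (fS : forall x, S (f x)) :
  embedding f -> embedding (fun x => exist S (f x) (fS x) : substructure S).
Proof.
by move=> [finj frel]; split=> // x y /(f_equal (@proj1_sig _ _)) /finj.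
Qed.

Lemma embedding_PO A B (f : A -> B) :
  embedding f -> is_PO_realizers B -> is_PO_realizers A.
Proof.
move=> [finj [flt flti]] [Blin Blt]; split=> [i|x y].
  exact: strict_linear_order_inj finj (flti i) (Blin i).
split=> [/flt /Blt xy i|xy]; first exact/(flti i)/xy.
by apply/flt/Blt => i; apply/(flti i)/xy.
Qed.

Lemma substructure_age M (S : M -> Prop) : finite_subset S -> age M (substructure S).
Proof.
move=> /finite_substructure Sfin; split=> //.
by exists (@proj1_sig _ _); split=> [x y /sig_eq|].
Qed.

Lemma age_hereditary M A B : age M A -> finite_structure B -> embeds B A -> age M B.
Proof.
move=> [_ [f femb]] Bfin [g gemb]; split=> //.
by exists (fun x => f (g x)); apply: embedding_comp.
Qed.

Lemma joint_image M B C (beta : B -> M) (gamma : C -> M) :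
  finite_structure B -> finite_structure C -> embedding beta -> embedding gamma ->
  exists S : M -> Prop, finite_subset S /\
  exists (g : B -> substructure S) (h : C -> substructure S),
    embedding g /\ embedding h /\
    (forall b, proj1_sig (g b) = beta b) /\ (forall c, proj1_sig (h c) = gamma c).
Proof.
move=> [sB HB] [sC HC] bemb cemb.
pose S d := (exists b, beta b = d) \/ (exists c, gamma c = d).
have Sb b : S (beta b) by left; exists b.
have Sc c : S (gamma c) by right; exists c.
exists S; split.
  exists (map beta sB ++ map gamma sC) => d [[b <-]|[c <-]]; apply: in_or_app.
    by left; apply/in_map/HB.
  by right; apply/in_map/HC.
exists (fun b => exist S (beta b) (Sb b)), (fun c => exist S (gamma c) (Sc c)).
by split; [apply: embedding_corestrict | split; first apply: embedding_corestrict].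
Qed.

Variable i0 : 'I_n.

Lemma rlti_embedding A B (f : A -> B) :
  is_PO_realizers A -> is_PO_realizers B ->
  (forall i x y, rlti i x y <-> rlti i (f x) (f y)) -> embedding f.
Proof.
move=> [Alin Alt] [_ Blt] frel; split; last split=> // x y.
  move=> x y fxy; apply: (strict_linear_eq (Alin i0)) => /(frel i0);
    rewrite fxy => /(frel i0); apply: (Alin i0).1.
split=> [/Alt xy|/Blt fxy]; [apply/Blt => i | apply/Alt => i]; exact/frel.
Qed.

Lemma rlti_agree_functional A B (a : A) (b b' : B) :
  ~ rlti i0 a a -> strict_linear_order (rlti i0 : B -> B -> Prop) ->
  rlti_agree (a, b) (a, b') -> rlti_agree (a, b') (a, b) -> b = b'.
Proof.
move=> airr Blin abb' ab'b.
by apply: (strict_linear_eq Blin) => [/(abb' i0).2|/(ab'b i0).2].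
Qed.

Lemma extend_partial_iso M A (L0 : list (A * M)) :
  extension_property M -> rlti_linear A -> finite_structure A -> partial_iso L0 ->
  exists L, partial_iso L /\ incl L0 L /\ forall x, exists y, In (x, y) L.
Proof.
move=> Mext Alin [s Hs] L0iso.
suff [L [Liso [L0L dom]]] : exists L, partial_iso L /\ incl L0 L /\
    forall x, In x s -> exists y, In (x, y) L.
  by exists L; do 2 split=> //; move=> x; apply/dom/Hs.
elim: s {Hs} => [|x s [L [Liso [L0L dom]]]].
  by exists L0; do 2 split=> //; apply: incl_refl.
have [y xLiso] := Mext A Alin L Liso x.
exists ((x, y) :: L); do 2 split=> //; first exact: incl_tl.
by move=> z [<-|/dom [y' zy']]; [exists y; left | exists y'; right].
Qed.

Lemma extend_to_rlti_map M A (L0 : list (A * M)) :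
  extension_property M -> rlti_linear M -> rlti_linear A -> finite_structure A ->
  partial_iso L0 ->
  exists beta : A -> M, (forall i x y, rlti i x y <-> rlti i (beta x) (beta y)) /\
                        (forall p, In p L0 -> beta p.1 = p.2).
Proof.
move=> Mext Mlin Alin Afin L0iso.
have [L [Liso [L0L dom]]] := extend_partial_iso Mext Alin Afin L0iso.
have [beta Lbeta] := choice _ dom.
exists beta; split=> [i x y|[a b] /L0L Lab]; first exact: Liso (Lbeta x) (Lbeta y) i.
symmetry; apply: (rlti_agree_functional ((Alin i0).1 a) (Mlin i0)); exact: Liso.
Qed.

Lemma extension_choice M : extension_property M -> rlti_linear M ->
  exists ext : list (M * M) -> M -> M,
    forall L x, partial_iso L -> partial_iso ((x, ext L x) :: L).
Proof.
move=> Mext Mlin.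
apply: (choice (fun L f =>
  forall x, partial_iso L -> partial_iso ((x, f x) :: L))) => L.
apply: (choice (fun x y => partial_iso L -> partial_iso ((x, y) :: L))) => x.
case: (classic (partial_iso L)) => [Liso|]; last by exists x.
by have [y Hy] := Mext M Mlin L Liso x; exists y.
Qed.

Section BackAndForth.
Variables (M : structure n) (en : nat -> M).
Hypotheses (en_onto : forall x, exists k, en k = x) (Mlin : rlti_linear M)
  (Mext : extension_property M).

Lemma back_and_forth (L0 : list (M * M)) : partial_iso L0 ->
  exists sigma : M -> M, (forall y, exists x, sigma x = y) /\
    (forall i x y, rlti i x y <-> rlti i (sigma x) (sigma y)) /\
    (forall p, In p L0 -> sigma p.1 = p.2).
Proof.
move=> L0iso.
have [forth Hforth] := extension_choice Mext Mlin.
pose back L y := forth (map swap_pair L) y.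
have Hback L y : partial_iso L -> partial_iso ((back L y, y) :: L).
  move=> /partial_iso_swap /(Hforth _ y) /partial_iso_swap.
  by rewrite /= map_map (map_ext _ _ swap_pairK) map_id.
pose fix stage k := if k is k'.+1 then
    let L := (en k', forth (stage k') (en k')) :: stage k' in
    (back L (en k'), en k') :: L
  else L0.
have stage_iso k : partial_iso (stage k) by elim: k => //= k IH; apply/Hback/Hforth.
have stage_mono j k : (j <= k)%N -> incl (stage j) (stage k).
  elim: k => [|k IH]; first by rewrite leqn0 => /eqP ->; apply: incl_refl.
  rewrite leq_eqVlt => /predU1P [-> | /IH jk]; first exact: incl_refl.
  by move=> p /jk Hp; do 2 right.
pose U p := exists k, In p (stage k).
have Uiso p q : U p -> U q -> rlti_agree p q.
  move=> [j Hp] [k Hq]; apply: (stage_iso (maxn j k)).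
    exact: stage_mono (leq_maxl j k) _ Hp.
  exact: stage_mono (leq_maxr j k) _ Hq.
have Ufun a b b' : U (a, b) -> U (a, b') -> b = b'.
  move=> ab ab'; apply: (rlti_agree_functional ((Mlin i0).1 a) (Mlin i0));
  exact: Uiso.
have [sigma Usigma] : exists sigma : M -> M, forall x, U (x, sigma x).
  apply: (choice (fun x y => U (x, y))) => x; have [k <-] := en_onto x.
  by exists (forth (stage k) (en k)), k.+1; right; left.
exists sigma; split=> [y|]; last split=> [i x y|[a b] L0ab].
- have [k <-] := en_onto y.
  exists (back ((en k, forth (stage k) (en k)) :: stage k) (en k)).
  by apply: Ufun (Usigma _) _; exists k.+1; left.
- exact: Uiso (Usigma x) (Usigma y) i.
- by apply: Ufun (Usigma a) _; exists 0%N.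
Qed.

End BackAndForth.

End Structures.

Section DenseStructure.
Variables (n : nat) (i0 : 'I_n) (D : {ffun 'I_n -> rat} -> Prop).
Hypotheses (Ddense : dense_in_Qn D) (Dsep : no_shared_coordinate D).
Local Notation Dn := (D_structure D).
Local Open Scope ring_scope.

Lemma D_coord_neq (a b : Dn) i : a <> b -> proj1_sig a i <> proj1_sig b i.
Proof.
case: a b => [a Da] [b Db] /= ab; apply: Dsep => // ab'.
by apply: ab; apply: sig_eq.
Qed.

Lemma D_rlti_linear : rlti_linear Dn.
Proof.
move=> i; split=> [a|]; first by rewrite /= ltxx.
split=> [a b c|a b /(D_coord_neq (i := i)) /eqP]; first exact: lt_trans.
by rewrite neq_lt => /orP [] ?; [left | right].
Qed.

Lemma D_is_PO : is_PO_realizers Dn.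
Proof.
split; first exact: D_rlti_linear.
move=> a b; split=> [[ab nab] i|ab].
  rewrite /= lt_neqAle ab andbT; apply/eqP/D_coord_neq.
  by move/(congr1 (@proj1_sig _ _)).
split=> [i|ab']; first exact/ltW/ab.
by have := ab i0; rewrite /= ab' ltxx.
Qed.

Lemma D_countable : countable_structure Dn.
Proof.
by exists (fun a => pickle (proj1_sig a)) => a b /(pcan_inj pickleK) /sig_eq.
Qed.

Lemma D_enumeration : exists en : nat -> Dn, forall a, exists k, en k = a.
Proof.
have [|d [Dd _]] := @Ddense [ffun => 0] [ffun => 1].
  by move=> i; rewrite !ffunE ltr01.
have [f finj] := D_countable.
exact (countable_enumeration (exist D d Dd : Dn) finj).
Qed.

Lemma D_extension_property : extension_property Dn.
Proof.
move=> A Alin L Liso x.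
case: (classic (exists b, In (x, b) L)) => [[b xb]|xnew].
  by exists b; apply: partial_iso_incl Liso; apply/incl_cons/incl_refl.
have /fin_all_exists [lo /fin_all_exists [hi gap]] i : exists lo hi, lo < hi /\
    (forall p, In p L -> rlti i p.1 x -> proj1_sig p.2 i <= lo) /\
    (forall q, In q L -> rlti i x q.1 -> hi <= proj1_sig q.2 i).
  apply: exists_gap_on => p q Lp Lq px xq.
  exact/(Liso p q Lp Lq i)/((Alin i).2.1 _ _ _ px xq).
have [|d [Dd dgap]] := @Ddense [ffun i => lo i] [ffun i => hi i].
  by move=> i; rewrite !ffunE; case: (gap i).
have {dgap} dgap i : lo i < d i < hi i by have := dgap i; rewrite !ffunE.
exists (exist D d Dd).
have xnew' q : In q L -> x <> q.1.
  by case: q => a b Lab /= xa; apply: xnew; exists b; rewrite xa.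
have below q i : In q L -> rlti i x q.1 -> d i < proj1_sig q.2 i.
  move=> Lq xq; have [_ [_ Hhi]] := gap i.
  by apply: lt_le_trans (Hhi q Lq xq); case/andP: (dgap i).
have above p i : In p L -> rlti i p.1 x -> proj1_sig p.2 i < d i.
  move=> Lp px; have [_ [Hlo _]] := gap i.
  by apply: le_lt_trans (Hlo p Lp px) _; case/andP: (dgap i).
move=> p q [<-|Lp] [<-|Lq] i /=.
- by split=> [/((Alin i).1 x) | ] //; rewrite ltxx.
- exact: strict_linear_transfer (Alin i) (xnew' q Lq) (below q i Lq) (above q i Lq).
- apply: strict_linear_transfer (Alin i) _ (above p i Lp) (below p i Lp).
  by move/esym; apply: xnew'.
- exact: Liso.
Qed.

Lemma D_ultrahomogeneous : ultrahomogeneous Dn.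
Proof.
move=> S1 S2 /finite_substructure [l Hl] _ g [[_ [_ grel]] _].
have [en en_onto] := D_enumeration.
pose L0 := map (fun s : substructure S1 => (proj1_sig s, proj1_sig (g s))) l.
have L0iso : partial_iso L0.
  by move=> _ _ /in_map_iff [s [<- _]] /in_map_iff [t [<- _]] i; apply: grel.
have [sigma [sonto [srel sL0]]] :=
  back_and_forth i0 en_onto D_rlti_linear D_extension_property L0iso.
exists sigma; split.
  by split=> //; exact (rlti_embedding i0 D_is_PO D_is_PO srel).
by move=> s; apply: (sL0 (_, _)); apply/in_map/Hl.
Qed.

Lemma age_D A : age Dn A <-> PO_class A.
Proof.
split=> [[Afin [f femb]]|[Afin APO]].
  by split=> //; apply: embedding_PO femb D_is_PO.
split=> //; have [|beta [brel _]] := extend_to_rlti_map i0 (L0 := nil)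
  D_extension_property D_rlti_linear APO.1 Afin; first by move=> ? ? [].
by exists beta; exact (rlti_embedding i0 APO D_is_PO brel).
Qed.

Lemma PO_Fraisse_class : Fraisse_class (@PO_class n).
Proof.
split; first by move=> A [].
split.
  exists (@Structure n Empty_set (fun _ _ => False) (fun _ _ _ => False)).
  split; first by exists nil; case.
  by split=> [i|[]]; split=> [[]|]; split=> [[]|[]].
split.
  by move=> A B /age_D KA Bfin BA; apply/age_D; apply: age_hereditary KA Bfin BA.
split.
  move=> A B /age_D [Afin [al Hal]] /age_D [Bfin [be Hbe]].
  have [S [Sfin [g [h [Hg [Hh _]]]]]] := joint_image Afin Bfin Hal Hbe.
  exists (substructure S); split; first exact/age_D/substructure_age.
  by split; [exists g | exists h].
move=> A B C e f [[sA HsA] _] [Bfin BPO] /age_D [Cfin [gam Hgam]] He Hf.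
pose L0 := map (fun a => (e a, gam (f a))) sA.
have L0iso : partial_iso L0.
  move=> _ _ /in_map_iff [a [<- _]] /in_map_iff [a' [<- _]] i /=.
  apply: iff_trans (iff_sym (He.2.2 i a a')) _.
  exact: iff_trans (Hf.2.2 i a a') (Hgam.2.2 i _ _).
have [beta [brel bL0]] :=
  extend_to_rlti_map i0 D_extension_property D_rlti_linear BPO.1 Bfin L0iso.
have Hbeta := rlti_embedding i0 BPO D_is_PO brel.
have [S [Sfin [g [h [Hg [Hh [gval hval]]]]]]] := joint_image Bfin Cfin Hbeta Hgam.
exists (substructure S), g, h; split; first exact/age_D/substructure_age.
do 2 split=> //; move=> a; apply: sig_eq; rewrite gval hval.
by apply: (bL0 (_, _)); apply/in_map/HsA.
Qed.

End DenseStructure.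

Theorem theorem3p2 (n : nat) (D : {ffun 'I_n -> rat} -> Prop) :
  (2 <= n)%N -> dense_in_Qn D -> no_shared_coordinate D ->
  ultrahomogeneous (D_structure D) /\
  (forall A : structure n, age (D_structure D) A <-> PO_class A) /\
  Fraisse_class (@PO_class n) /\
  Fraisse_limit (@PO_class n) (D_structure D).
Proof.
move=> n2 Ddense Dsep; pose i0 : 'I_n := Ordinal (leq_trans (isT : 0 < 2)%N n2).
have ultra := D_ultrahomogeneous i0 Ddense Dsep.
have age_eq := age_D i0 Ddense Dsep.
split=> //; split=> //; split; first exact (PO_Fraisse_class i0 Ddense Dsep).
by split=> //; apply: D_countable.
Qed.
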